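(* Let $s\ge1$. A general binary form $p\in H_{2s}(\mathbb{C}^2)$ can be written as $$p(x,y) = \Bigl(\sum_{k=0}^s t_kx^{s-k}y^k\Bigr)^2 + \Bigl(\sum_{k=1}^s t_{s+k}x^{s-k}y^k\Bigr)^2, \qquad t_k\in\mathbb{C},$$ in exactly $\binom{2s-1}{s}$ different ways. Note that the monomial $x^s$ does not appear in the second form.
   Context: $H_d(\mathbb{C}^n)$ denotes the complex vector space of homogeneous polynomials of degree $d$ in $n$ variables. ''A general $p$ has property P'' means P holds for all $p$ in a nonempty Zariski-open subset of $H_d(\mathbb{C}^n)$. Two representations are considered the same if they agree up to replacing each of the two squared forms by its negative. *)

From HB Require Import structures.
From mathcomp Require Import all_boot all_order all_algebra.
Set Implicit Arguments. Unset Strict Implicit. Unset Printing Implicit Defensive.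
Import Order.TTheory GRing.Theory Num.Theory.
Local Open Scope ring_scope.

(* A polynomial in n variables over F, given as a finite list of terms
   (exponent vector, coefficient). *)
Definition mpoly (F : nzRingType) (n : nat) := seq (('I_n -> nat) * F).

Definition meval (F : comNzRingType) (n : nat) (g : mpoly F n) (x : 'I_n -> F) : F :=
  \sum_(m <- g) m.2 * \prod_(i < n) x i ^+ m.1 i.

Definition nonvanish (F : comNzRingType) (n : nat) (G : seq (mpoly F n)) (x : 'I_n -> F) : bool :=
  has (fun g => meval g x != 0) G.

(* "a general point of F^n has property P": P holds on a nonempty Zariski-open
   subset of F^n (every Zariski-open set is of the form nonvanish G). *)
Definition general (F : comNzRingType) (n : nat) (P : ('I_n -> F) -> Prop) : Prop :=
  exists G : seq (mpoly F n),
    (exists x, nonvanish G x) /\ (forall x, nonvanish G x -> P x).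

(* The binary form p(x,y) = sum_i c_i x^(2s-i) y^i, dehomogenized at x = 1. *)
Definition form_of (F : nzRingType) (s : nat) (c : 'I_(2 * s).+1 -> F) : {poly F} :=
  \poly_(i < (2 * s).+1) c (inord i).

(* First form  sum_{k=0}^s t_k x^(s-k) y^k  (dehomogenized at x = 1). *)
Definition formA (F : nzRingType) (s : nat) (t : 'I_(2 * s).+1 -> F) : {poly F} :=
  \poly_(k < s.+1) t (inord k).

(* Second form  sum_{k=1}^s t_(s+k) x^(s-k) y^k  (dehomogenized at x = 1). *)
Definition formB (F : nzRingType) (s : nat) (t : 'I_(2 * s).+1 -> F) : {poly F} :=
  \poly_(k < s.+1) (if k == 0%N then 0 else t (inord (s + k))).

Definition is_rep (F : nzRingType) (s : nat) (c t : 'I_(2 * s).+1 -> F) : Prop :=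
  form_of c = formA t ^+ 2 + formB t ^+ 2.

(* Two representations are the same if they agree up to replacing each of the
   two squared forms by its negative. *)
Definition same_rep (F : nzRingType) (s : nat) (t t' : 'I_(2 * s).+1 -> F) : Prop :=
  exists b1 b2 : bool, forall k : 'I_(2 * s).+1,
    t' k = (if (k <= s)%N then (-1) ^+ b1 else (-1) ^+ b2) * t k.

Definition exactly_n_reps (F : nzRingType) (s N : nat) (c : 'I_(2 * s).+1 -> F) : Prop :=
  exists ts : 'I_N -> ('I_(2 * s).+1 -> F),
    (forall i, is_rep c (ts i)) /\
    (forall i j, i != j -> ~ same_rep (ts i) (ts j)) /\
    (forall t, is_rep c t -> exists i, same_rep (ts i) t).

(* Dehomogenize at x = 1.  A representation p = A^2 + B^2 with deg A, deg B <= s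
   and B(0) = 0 is the same as a factorization p = f g with f = A + iB,
   g = A - iB, deg f, deg g <= s and f(0) = g(0).  If p has 2s distinct nonzero
   roots r_i, such an f is, up to sign, lam_S * prod_(i in S) (X - r_i) for an
   s-subset S of the roots, lam_S^2 being fixed by f(0) = g(0).  Replacing
   (f, g) by (-f, -g) or by (g, f) only changes the signs of A and B, so the
   representations correspond to the pairs {S, complement of S}, i.e. to the
   s-subsets avoiding r_0: there are C(2s-1, s) of them.
   A general form has nonzero extreme coefficients c_0, c_2s and simple roots:
   c_0 * c_2s * Res(p, p') is an explicit polynomial in the coefficients which
   does not vanish at y^2s - x^2s.            *)
From Pilot Require Import Defs.
From HB Require Import structures.
From mathcomp Require Import all_boot all_order all_algebra all_fingroup all_field.
From mathcomp Require Import zify ring.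
Set Implicit Arguments. Unset Strict Implicit. Unset Printing Implicit Defensive.
Import Order.TTheory GRing.Theory Num.Theory.
Local Open Scope ring_scope.

Section TermLists.
Variables (F : comNzRingType) (n : nat).
Implicit Types (g h : mpoly F n) (x : 'I_n -> F).

Definition mconst (a : F) : mpoly F n := [:: (fun _ => 0%N, a)].
Definition mvar (i : 'I_n) : mpoly F n := [:: (fun j => nat_of_bool (j == i), 1)].
Definition mmul g h : mpoly F n :=
  [seq (fun i => (m1.1 i + m2.1 i)%N, m1.2 * m2.2) | m1 <- g, m2 <- h].
Definition msum (l : seq (mpoly F n)) : mpoly F n := flatten l.
Definition mprod (l : seq (mpoly F n)) : mpoly F n := foldr mmul (mconst 1) l.

Lemma meval_const a x : meval (mconst a) x = a.
Proof. by rewrite /meval big_seq1 /= big1 ?mulr1 // => i _; rewrite expr0. Qed.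

Lemma meval_nil x : meval ([::] : mpoly F n) x = 0.
Proof. by rewrite /meval big_nil. Qed.

Lemma meval_var i x : meval (mvar i) x = x i.
Proof.
rewrite /meval big_seq1 /= mul1r (bigD1 i) //= eqxx expr1 big1 ?mulr1 //.
by move=> j /negPf ->; rewrite expr0.
Qed.

Lemma meval_mul g h x : meval (mmul g h) x = meval g x * meval h x.
Proof.
rewrite /meval /mmul big_allpairs_dep /= mulr_suml; apply: eq_bigr => m1 _.
rewrite mulr_sumr; apply: eq_bigr => m2 _ /=.
by under eq_bigr do rewrite exprD; rewrite big_split /= mulrACA.
Qed.

Lemma meval_sum l x : meval (msum l) x = \sum_(g <- l) meval g x.
Proof.
elim: l => [|g l IH]; first by rewrite big_nil meval_nil.
by rewrite /msum /= /meval big_cat big_cons -IH.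
Qed.

Lemma meval_prod l x : meval (mprod l) x = \prod_(g <- l) meval g x.
Proof.
elim: l => [|g l IH]; first by rewrite big_nil meval_const.
by rewrite /mprod /= meval_mul big_cons -IH.
Qed.

Definition mdet k (e : 'I_k -> 'I_k -> mpoly F n) : mpoly F n :=
  msum [seq mmul (mconst ((-1) ^+ odd_perm s)) (mprod [seq e i (s i) | i <- enum 'I_k])
       | s : 'S_k <- enum ('S_k)].

Lemma meval_det k (e : 'I_k -> 'I_k -> mpoly F n) x :
  meval (mdet e) x = \det (\matrix_(i, j) meval (e i j) x).
Proof.
rewrite /mdet meval_sum big_map /determinant big_enum /=.
apply: eq_bigr => s _; rewrite meval_mul meval_const meval_prod big_map big_enum /=.
by congr (_ * _); apply: eq_bigr => i _; rewrite mxE.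
Qed.
End TermLists.

Lemma resultant_entrywise (R : comNzRingType) (p q : {poly R}) dp dq
    (E : 'I_(dq + dp) -> 'I_(dq + dp) -> R) :
  (size q).-1 = dq -> (size p).-1 = dp ->
  (forall i j, E i j = match split i with inl k => p`_(j - k) *+ (k <= j)
                       | inr k => q`_(j - k) *+ (k <= j) end) ->
  resultant p q = \det (\matrix_(i, j) E i j).
Proof.
move=> Hq Hp HE; rewrite /resultant; have := @Sylvester_mxE R p q.
move: (Sylvester_mx p q); rewrite Hq Hp => M HM.
by congr (\det _); apply/matrixP => i j; rewrite HM mxE HE.
Qed.

Lemma resultant_deriv_neq0 (F : fieldType) (q : {poly F}) : q != 0 ->
  (resultant q q^`() != 0) = separable_poly q.
Proof.
move=> q0; rewrite resultant_eq0 -leqNgt unlock coprimep_def.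
have : (0 < size (gcdp q q^`()))%N by rewrite size_poly_gt0 gcdp_eq0 negb_and q0.
by case: (size _) => [|[|k]].
Qed.

Lemma dvdp_size_scale (F : fieldType) (f h : {poly F}) :
  h != 0 -> h %| f -> (size f <= size h)%N -> exists a, f = a *: h.
Proof.
move=> h0 /dvdpP [q ->] hle; exists q`_0.
have [->|q0] := eqVneq q 0; first by rewrite mul0r coef0 scale0r.
rewrite -mul_polyC; congr (_ * _); apply: size1_polyC.
move: hle; rewrite size_mul //.
have hh : (0 < size h)%N by rewrite size_poly_gt0.
by rewrite -(prednK hh) addnS /= -add1n leq_add2r.
Qed.

(* Sum of two squares over a field containing i: A^2 + B^2 = (A + iB)(A - iB),
   and the pair (A, B) is recovered from f = A + iB, g = A - iB. *)
Section SumOfTwoSquares.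
Variable F : numClosedFieldType.
Implicit Types f g A B : {poly F}.

Definition re_part f g := 2^-1 *: (f + g).
Definition im_part f g := (2^-1 / 'i) *: (f - g).

Let half2 : ((2^-1 : F)%:P) * 2%:R = 1.
Proof. by rewrite -polyC_natr -polyCM mulVf ?pnatr_eq0. Qed.

Let i_half : 'i * (2^-1 / 'i) = 2^-1 :> F.
Proof. by rewrite mulrC divfK ?neq0Ci. Qed.

Lemma sum_sq_parts f g : re_part f g ^+ 2 + im_part f g ^+ 2 = f * g.
Proof.
rewrite /re_part /im_part -!mul_polyC.
have hv : ((2^-1 / 'i : F)%:P) ^+ 2 = - ((2^-1 : F)%:P ^+ 2).
  by rewrite -!rmorphXn -rmorphN /= exprMn exprVn ['i^-1 ^+ 2]exprVn sqrCi invrN1 mulrN1.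
have h1 : (1 : {poly F}) = ((2^-1 : F)%:P * 2%:R) * ((2^-1 : F)%:P * 2%:R).
  by rewrite half2 mulr1.
rewrite !exprMn hv -[f * g]mul1r h1; ring.
Qed.

Lemma parts_addi f g : re_part f g + 'i *: im_part f g = f.
Proof. by rewrite /re_part /im_part scalerA i_half -!mul_polyC -[RHS]mul1r -half2; ring. Qed.

Lemma parts_subi f g : re_part f g - 'i *: im_part f g = g.
Proof. by rewrite /re_part /im_part scalerA i_half -!mul_polyC -[RHS]mul1r -half2; ring. Qed.

Lemma mul_conj A B : (A + 'i *: B) * (A - 'i *: B) = A ^+ 2 + B ^+ 2.
Proof.
rewrite -!mul_polyC.
have hi : ('i%:P : {poly F}) ^+ 2 = -1 by rewrite -rmorphXn sqrCi rmorphN1.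
transitivity (A ^+ 2 - ('i%:P) ^+ 2 * B ^+ 2); first by ring.
by rewrite hi mulN1r opprK.
Qed.

Lemma re_part_conj A B : re_part (A + 'i *: B) (A - 'i *: B) = A.
Proof. by rewrite /re_part -!mul_polyC -[RHS]mul1r -half2; ring. Qed.

Lemma im_part_conj A B : im_part (A + 'i *: B) (A - 'i *: B) = B.
Proof.
rewrite /im_part -!mul_polyC.
have -> : (2^-1 / 'i : F)%:P * (A + 'i%:P * B - (A - 'i%:P * B))
   = (2^-1 / 'i * 'i : F)%:P * 2%:R * B by rewrite !polyCM; ring.
by rewrite divfK ?neq0Ci // half2 mul1r.
Qed.

Lemma re_part_swap f g : re_part g f = re_part f g.
Proof. by rewrite /re_part addrC. Qed.

Lemma im_part_swap f g : im_part g f = - im_part f g.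
Proof. by rewrite /im_part -scalerN opprB. Qed.

Lemma parts_scale e f g : re_part (e *: f) (e *: g) = e *: re_part f g /\
                          im_part (e *: f) (e *: g) = e *: im_part f g.
Proof. by rewrite /re_part /im_part -scalerDr -scalerBr !scalerA mulrC [_ * e]mulrC. Qed.
End SumOfTwoSquares.

Section FormCoefficients.
Variables (F : nzRingType) (s : nat).
Implicit Types (A B : {poly F}) (t : 'I_(2 * s).+1 -> F).

Definition rep_of A B : 'I_(2 * s).+1 -> F :=
  fun k => if (k <= s)%N then A`_k else B`_(k - s).

Lemma formA_rep_of A B : (size A <= s.+1)%N -> formA (rep_of A B) = A.
Proof.
move=> hA; apply/polyP => k; rewrite coef_poly; case: ltnP => hk.
  by rewrite /rep_of inordK ?ifT //; lia.
by rewrite nth_default // (leq_trans hA hk).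
Qed.

Lemma formB_rep_of A B : (size B <= s.+1)%N -> B`_0 = 0 -> Defs.formB (rep_of A B) = B.
Proof.
move=> hB hB0; apply/polyP => k; rewrite coef_poly; case: ltnP => hk.
  case: eqP => [->|/eqP k0]; first by rewrite hB0.
  by rewrite /rep_of inordK ?ifF ?addKn //; lia.
by rewrite nth_default // (leq_trans hB hk).
Qed.

Lemma rep_of_forms t k : rep_of (formA t) (Defs.formB t) k = t k.
Proof.
rewrite /rep_of !coef_poly; have hk := ltn_ord k; case: ifP => hk'.
  by rewrite ifT; [congr (t _); apply: val_inj; rewrite /= inordK|]; lia.
rewrite ifT ?ifF; [congr (t _); apply: val_inj; rewrite /= inordK| |]; lia.
Qed.

Lemma rep_of_scale (e : F) A B k : rep_of (e *: A) (e *: B) k = e * rep_of A B k.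
Proof. by rewrite /rep_of; case: ifP; rewrite coefZ. Qed.

Lemma forms_scale t t' e1 e2 :
  (forall k : 'I_(2 * s).+1, t' k = (if (k <= s)%N then e1 else e2) * t k) ->
  formA t' = e1 *: formA t /\ Defs.formB t' = e2 *: Defs.formB t.
Proof.
move=> H; split; apply/polyP => k; rewrite coefZ !coef_poly.
  case: ltnP => hk; last by rewrite mulr0.
  by rewrite H inordK ?ifT //; lia.
case: ltnP => hk; last by rewrite mulr0.
case: eqP => k0; first by rewrite mulr0.
by rewrite H inordK ?ifF //; lia.
Qed.

Lemma size_formA t : (size (formA t) <= s.+1)%N.
Proof. exact: size_poly. Qed.

Lemma size_formB t : (size (Defs.formB t) <= s.+1)%N.
Proof. exact: size_poly. Qed.

Lemma formB_at0 t : (Defs.formB t).[0] = 0.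
Proof. by rewrite horner_coef0 coef_poly. Qed.

Lemma inord_top : inord (2 * s) = ord_max :> 'I_(2 * s).+1.
Proof. by apply: val_inj; rewrite /= inordK. Qed.

Lemma size_form_of (c : 'I_(2 * s).+1 -> F) : c ord_max != 0 -> size (form_of c) = (2 * s).+1.
Proof.
by move=> cN; rewrite size_poly_eq //= inord_top.
Qed.

Lemma lead_coef_form_of (c : 'I_(2 * s).+1 -> F) : c ord_max != 0 ->
  lead_coef (form_of c) = c ord_max.
Proof.
by move=> cN; rewrite lead_coef_poly //= inord_top.
Qed.

Lemma form_of_at0 (c : 'I_(2 * s).+1 -> F) : (form_of c).[0] = c ord0.
Proof. by rewrite horner_coef0 coef_poly /=; congr (c _); apply: val_inj; rewrite /= inordK. Qed.
End FormCoefficients.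

Section SubsetsAvoidingZero.
Variables n k : nat.

Definition lift_set (A : {set 'I_n}) : {set 'I_n.+1} := [set lift ord0 j | j in A].

Lemma card_ksets : 'C(n, k) = #|[set A : {set 'I_n} | #|A| == k]|.
Proof. by rewrite card_draws card_ord. Qed.

Definition kset (i : 'I_('C(n, k))) : {set 'I_n.+1} :=
  lift_set (enum_val (cast_ord card_ksets i)).

Lemma card_lift_set A : #|lift_set A| = #|A|.
Proof. exact/card_imset/lift_inj. Qed.

Lemma notin0_lift_set A : ord0 \notin lift_set A.
Proof. by apply/imsetP => [[j _ /eqP]]; rewrite (negPf (neq_lift _ _)). Qed.

Lemma card_kset i : #|kset i| = k.
Proof.
by rewrite card_lift_set; have := enum_valP (cast_ord card_ksets i); rewrite inE => /eqP.
Qed.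

Lemma notin0_kset i : ord0 \notin kset i.
Proof. exact: notin0_lift_set. Qed.

Lemma kset_inj : injective kset.
Proof.
move=> i j eS; apply: (cast_ord_inj (eq_n := card_ksets)); apply: enum_val_inj.
apply/setP => x; have mem_lift (A : {set 'I_n}) : (x \in A) = (lift ord0 x \in lift_set A).
  by rewrite mem_imset //; exact: lift_inj.
by rewrite !mem_lift; move: eS; rewrite /kset => ->.
Qed.

Lemma kset_onto (S : {set 'I_n.+1}) : #|S| = k -> ord0 \notin S -> exists i, kset i = S.
Proof.
move=> cS S0; set A := [set j | lift ord0 j \in S].
have AS : lift_set A = S.
  apply/setP => x; case: (unliftP ord0 x) => [j ->|->].
    by rewrite mem_imset ?inE //; exact: lift_inj.
  by rewrite (negPf S0) (negPf (notin0_lift_set _)).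
have HA : A \in [set A : {set 'I_n} | #|A| == k] by rewrite inE -card_lift_set AS cS.
exists (cast_ord (esym card_ksets) (enum_rank_in HA A)).
by rewrite /kset cast_ordKV enum_rankK_in.
Qed.
End SubsetsAvoidingZero.

Section BalancedFactorizations.
Variables (F : numClosedFieldType) (s n : nat).
Hypothesis n_roots : n.+1 = (2 * s)%N.
Variables (c : 'I_(2 * s).+1 -> F) (lc : F) (r : 'I_n.+1 -> F).
Hypotheses (lc_neq0 : lc != 0) (r_inj : injective r) (r_neq0 : forall i, r i != 0).
Hypothesis pE : form_of c = lc *: \prod_(i < n.+1) ('X - (r i)%:P).
Let p := form_of c.
Implicit Types (S T : {set 'I_n.+1}) (f g : {poly F}).

Definition PS S := \prod_(z <- [seq r i | i in S]) ('X - z%:P).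

Lemma PS_split S : p = lc *: (PS S * PS (~: S)).
Proof.
rewrite /p pE /PS !big_image (bigID (mem S)) /=; congr (_ *: (_ * _)).
by apply: eq_bigl => i; rewrite in_setC.
Qed.

Lemma size_PS S : size (PS S) = #|S|.+1.
Proof. by rewrite /PS size_prod_XsubC size_image. Qed.

Lemma PS_neq0 S : PS S != 0.
Proof. by rewrite -size_poly_gt0 size_PS. Qed.

Lemma PS_at0 S : (PS S).[0] != 0.
Proof.
rewrite /PS -/(root _ 0) root_prod_XsubC; apply/negP => /imageP [i _ /esym].
by apply/eqP; rewrite r_neq0.
Qed.

Lemma root_PS S k : root (PS S) (r k) = (k \in S).
Proof. by rewrite /PS root_prod_XsubC mem_image //; exact: r_inj. Qed.

Lemma card_setC_half S : #|S| = s -> #|~: S| = s.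
Proof. by move=> hS; have := cardsC S; rewrite card_ord hS; have := n_roots; lia. Qed.

(* The balanced factorization p = fS S * gS S: the scalars are chosen so that
   the two factors agree at 0. *)
Definition lam S := sqrtC (lc * (PS (~: S)).[0] / (PS S).[0]).
Definition mu S := lc / lam S.
Definition fS S := lam S *: PS S.
Definition gS S := mu S *: PS (~: S).

Lemma lam_neq0 S : lam S != 0.
Proof. by rewrite /lam sqrtC_eq0 !mulf_neq0 ?invr_eq0 ?PS_at0. Qed.

Lemma mu_neq0 S : mu S != 0.
Proof. by rewrite /mu mulf_neq0 ?invr_eq0 ?lam_neq0. Qed.

Lemma mul_fS_gS S : fS S * gS S = p.
Proof.
rewrite (PS_split S) /fS /gS -scalerAl -scalerAr scalerA /mu.
by rewrite mulrC divfK ?lam_neq0.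
Qed.

Lemma fS_gS_at0 S : (fS S).[0] = (gS S).[0].
Proof.
rewrite /fS /gS !hornerZ /mu; have la := lam_neq0 S; apply: (mulfI la).
rewrite mulrA -expr2 /lam sqrtCK -/(lam S) divfK ?PS_at0 // mulrA.
by rewrite [lam S * (lc / _)]mulrC divfK.
Qed.

Lemma root_fS S k : root (fS S) (r k) = (k \in S).
Proof. by rewrite /fS rootZ ?lam_neq0 // root_PS. Qed.

Lemma root_gS S k : root (gS S) (r k) = (k \notin S).
Proof. by rewrite /gS rootZ ?mu_neq0 // root_PS in_setC. Qed.

Lemma size_fS S : #|S| = s -> size (fS S) = s.+1.
Proof. by move=> hS; rewrite /fS size_scale ?lam_neq0 // size_PS hS. Qed.

Lemma size_gS S : #|S| = s -> size (gS S) = s.+1.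
Proof. by move=> hS; rewrite /gS size_scale ?mu_neq0 // size_PS card_setC_half. Qed.

Definition rootset f := [set i | root f (r i)].

Lemma factor_shape f g : f * g = p -> (size f <= s.+1)%N -> (size g <= s.+1)%N ->
  [/\ #|rootset f| = s, exists a, f = a *: PS (rootset f)
                      & exists b, g = b *: PS (~: rootset f)].
Proof.
move=> hfg hf hg.
have p0 : p != 0 by rewrite (PS_split set0) scaler_eq0 negb_or lc_neq0 mulf_neq0 ?PS_neq0.
have f0 : f != 0 by apply: contraNneq p0 => f0; rewrite -hfg f0 mul0r.
have g0 : g != 0 by apply: contraNneq p0 => g0; rewrite -hfg g0 mulr0.
have dvd_rootset h : PS (rootset h) %| h.
  apply: uniq_roots_dvdp; first by apply/allP => z /imageP [i iS ->]; rewrite inE in iS.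
  by rewrite uniq_rootsE map_inj_uniq ?enum_uniq.
have card_rootset h : h != 0 -> (#|rootset h| < size h)%N.
  by move=> h0; rewrite -size_PS; apply: dvdp_leq.
set S := rootset f; set T := rootset g.
have hU : S :|: T = setT.
  apply/setP => i; rewrite !inE -rootM hfg (PS_split set0) rootZ //.
  by rewrite rootM !root_PS !inE.
have := cardsUI S T; rewrite hU cardsT card_ord => hc.
have := card_rootset f f0; have := card_rootset g g0; rewrite -/S -/T => cT cS.
have := n_roots => n2s.
have hS : #|S| = s by lia.
have hI : S :&: T = set0 by apply: cards0_eq; lia.
have hT : T = ~: S.
  apply/setP => i; have /setP/(_ i) := hU; have /setP/(_ i) := hI; rewrite !inE.
  by case: (root f (r i)); case: (root g (r i)).
split=> //; apply: dvdp_size_scale; rewrite ?PS_neq0 ?size_PS ?hS ?card_setC_half //.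
  exact: dvd_rootset.
by rewrite -hT dvd_rootset.
Qed.

Lemma balanced_factor f g : f * g = p -> (size f <= s.+1)%N -> (size g <= s.+1)%N ->
  f.[0] = g.[0] ->
  #|rootset f| = s /\ exists b : bool, f = (-1) ^+ b *: fS (rootset f) /\
                                       g = (-1) ^+ b *: gS (rootset f).
Proof.
move=> hfg hf hg h0; have [cS [a ha] [b hb]] := factor_shape hfg hf hg.
set S := rootset f in cS ha hb *.
have hab : a * b = lc.
  have := hfg; rewrite ha hb -scalerAl -scalerAr scalerA (PS_split S) => /(congr1 lead_coef).
  by rewrite !lead_coefZ => /mulIf; apply; rewrite lead_coef_eq0 mulf_neq0 ?PS_neq0.
have a0 : a != 0 by apply: contraNneq lc_neq0 => a0; rewrite -hab a0 mul0r.
have hsq : a ^+ 2 = lam S ^+ 2.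
  rewrite /lam sqrtCK; apply: (mulIf (PS_at0 S)).
  by rewrite divfK ?PS_at0 // expr2 -mulrA -hornerZ -ha h0 hb hornerZ mulrA hab.
have hbE : b = lc / a by rewrite -hab mulrAC mulfV // mul1r.
move/eqP: hsq; rewrite eqf_sqr => hal.
split=> //; exists (a != lam S); rewrite ha hb hbE /fS /gS !scalerA /mu.
by case: eqP hal => [->|_ /eqP ->] /=; rewrite ?expr0 ?expr1 ?mul1r ?mulN1r ?invrN ?mulrN.
Qed.

Definition rep_of_set S := @rep_of F s (re_part (fS S) (gS S)) (im_part (fS S) (gS S)).

Lemma forms_rep_of_set S : #|S| = s ->
  formA (rep_of_set S) = re_part (fS S) (gS S) /\
  Defs.formB (rep_of_set S) = im_part (fS S) (gS S).
Proof.
move=> hS; have hf := size_fS hS; have hg := size_gS hS.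
have hsz (h1 h2 : {poly F}) : size h1 = s.+1 -> size h2 = s.+1 -> (size (h1 + h2)%R <= s.+1)%N.
  by move=> e1 e2; apply: leq_trans (size_polyD _ _) _; rewrite e1 e2 maxnn.
rewrite /rep_of_set formA_rep_of ?formB_rep_of //.
- exact: leq_trans (size_scale_leq _ _) (hsz _ _ hf (etrans (size_polyN _) hg)).
- by rewrite coefZ coefB -!horner_coef0 fS_gS_at0 subrr mulr0.
- exact: leq_trans (size_scale_leq _ _) (hsz _ _ hf hg).
Qed.

Lemma is_rep_of_set S : #|S| = s -> is_rep c (rep_of_set S).
Proof.
by move=> hS; rewrite /is_rep; have [-> ->] := forms_rep_of_set hS; rewrite sum_sq_parts mul_fS_gS.
Qed.

Lemma fS_gS_of_rep S : #|S| = s ->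
  formA (rep_of_set S) + 'i *: Defs.formB (rep_of_set S) = fS S /\
  formA (rep_of_set S) - 'i *: Defs.formB (rep_of_set S) = gS S.
Proof. by move=> hS; have [-> ->] := forms_rep_of_set hS; rewrite parts_addi parts_subi. Qed.

Lemma rep_of_set_inj S1 S2 : #|S1| = s -> #|S2| = s ->
  ord0 \notin S1 -> ord0 \notin S2 -> same_rep (rep_of_set S1) (rep_of_set S2) -> S1 = S2.
Proof.
move=> h1 h2 n1 n2 [b1 [b2 /forms_scale [hA hB]]].
have [f1 g1] := fS_gS_of_rep h1; have [f2 _] := fS_gS_of_rep h2.
have sgn0 (b : bool) : (-1) ^+ b != 0 :> F by rewrite signr_eq0.
move: f2; rewrite hA hB.
have [<-|nb] := eqVneq b1 b2.
  rewrite scalerA mulrC -scalerA -scalerDr f1 => ef.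
  by apply/setP => k; rewrite -root_fS -(root_fS S2) -ef (rootZ _ _ (sgn0 b1)).
have -> : b2 = ~~ b1 by move: nb; case: (b1); case: (b2).
rewrite signrN scalerA mulrN mulrC -mulrN -scalerA -scalerDr scaleNr g1 => eg.
by have := root_fS S2 ord0; rewrite -eg (rootZ _ _ (sgn0 b1)) root_gS (negPf n2) n1.
Qed.

Lemma rep_of_set_onto t : is_rep c t ->
  exists S, [/\ #|S| = s, ord0 \notin S & same_rep (rep_of_set S) t].
Proof.
rewrite /is_rep => ht; set A := formA t; set B := Defs.formB t.
set f := A + 'i *: B; set g := A - 'i *: B.
have hfg : f * g = p by rewrite mul_conj.
have hsz (e : F) : (size (A + e *: B)%R <= s.+1)%N.
  apply: leq_trans (size_polyD _ _) _; rewrite geq_max size_formA.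
  exact: leq_trans (size_scale_leq _ _) (size_formB _).
have hf : (size f <= s.+1)%N by exact: hsz.
have hg : (size g <= s.+1)%N by rewrite /g -scaleNr hsz.
have h0 : f.[0] = g.[0] by rewrite !hornerD hornerN !hornerZ formB_at0 mulr0 oppr0.
have tE k : t k = rep_of A B k by rewrite rep_of_forms.
have hA : A = re_part f g by rewrite re_part_conj.
have hB : B = im_part f g by rewrite im_part_conj.
have [cS [b [ef eg]]] := balanced_factor hfg hf hg h0.
set S := rootset f in cS ef eg.
have [S0|S0] := boolP (ord0 \in S); last first.
  exists S; split => //; exists b, b => k; rewrite if_same tE.
  rewrite hA hB ef eg.
  by have [-> ->] := parts_scale ((-1) ^+ b) (fS S) (gS S); rewrite rep_of_scale.
have [cT [b' [eg' ef']]] := balanced_factor (etrans (mulrC g f) hfg) hg hf (esym h0).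
set T := rootset g in cT eg' ef'.
have T0 : ord0 \notin T by rewrite inE eg rootZ ?signr_eq0 // root_gS S0.
exists T; split => //; exists b', (~~ b') => k; rewrite tE.
rewrite hA hB -re_part_swap -[im_part f g]opprK -im_part_swap ef' eg'.
have [-> ->] := parts_scale ((-1) ^+ b') (fS T) (gS T).
by rewrite /rep_of_set /rep_of signrN; case: ifP => _; rewrite ?coefN coefZ ?mulNr.
Qed.

Lemma exactly_reps_of_roots : exactly_n_reps 'C(n, s) c.
Proof.
exists (fun i => rep_of_set (kset i)); split; [|split].
- by move=> i; apply/is_rep_of_set/card_kset.
- move=> i j /negP nij /rep_of_set_inj eS; apply/nij/eqP/kset_inj.
  by apply: eS; rewrite ?card_kset ?notin0_kset.
- move=> t /rep_of_set_onto [S [cS S0 hS]].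
  by have [i iS] := kset_onto cS S0; exists i; rewrite iS.
Qed.
End BalancedFactorizations.

Lemma exactly_reps_of_separable (F : numClosedFieldType) (s : nat) (c : 'I_(2 * s).+1 -> F) :
  (0 < s)%N -> c ord0 != 0 -> c ord_max != 0 -> separable_poly (form_of c) ->
  exactly_n_reps 'C((2 * s - 1)%N, s) c.
Proof.
move=> hs c0 cN sep; have n_roots : (2 * s - 1).+1 = (2 * s)%N by lia.
have [rs prs] := closed_field_poly_normal (form_of c).
rewrite lead_coef_form_of // in prs.
have size_rs : size rs = (2 * s - 1).+1.
  by have := size_form_of cN; rewrite {1}prs size_scale // size_prod_XsubC n_roots => -[].
have uniq_rs : uniq rs.
  by rewrite -separable_prod_XsubC -(eqp_separable (eqp_scale _ cN)) -prs.
pose r (i : 'I_(2 * s - 1).+1) := rs`_i.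
have root_r i : root (form_of c) (r i).
  by rewrite prs rootZ // root_prod_XsubC mem_nth ?size_rs.
apply: (exactly_reps_of_roots n_roots (lc := c ord_max) (r := r)) => //.
- by move=> i j /eqP; rewrite nth_uniq ?size_rs // => /eqP /val_inj.
- by move=> i; apply: contraTneq (root_r i) => ->; rewrite /root form_of_at0.
- by rewrite {1}prs (big_nth 0) size_rs big_mkord.
Qed.

Lemma size_deriv_num (F : numDomainType) (q : {poly F}) : size q^`() = (size q).-1.
Proof.
have [->|q0] := eqVneq q 0; first by rewrite deriv0 size_poly0.
have := lt_size_deriv q0; have := q0; rewrite -lead_coef_eq0 lead_coefE.
case: (size q) => [|[|k]] lq hlt //; first by apply/eqP; rewrite -leqn0.
apply/anti_leq; rewrite -ltnS hlt /= leqNgt; apply/negP => /(nth_default 0) /eqP.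
by rewrite coef_deriv mulrn_eq0 (negPf lq).
Qed.

(* The genericity condition: c_0 * c_2s * Res(p, p') as an explicit
   polynomial in the coefficients c of p. *)
Section DiscriminantCondition.
Variables (F : numClosedFieldType) (s : nat).
Let N := (2 * s).+1.

Definition coef_term (m : nat) : mpoly F N := if (m < N)%N then mvar F (inord m) else [::].
Definition deriv_coef_term (m : nat) : mpoly F N := mmul (mconst N (m.+1)%:R) (coef_term m.+1).

Definition sylvester_term (i j : 'I_((2 * s).-1 + 2 * s)) : mpoly F N :=
  match split i with
  | inl k => if (k <= j)%N then coef_term (j - k) else [::]
  | inr k => if (k <= j)%N then deriv_coef_term (j - k) else [::]
  end.

Definition genericity_term : mpoly F N :=
  mmul (mmul (mvar F ord0) (mvar F ord_max)) (mdet sylvester_term).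

Lemma meval_coef_term m (x : 'I_N -> F) : meval (coef_term m) x = (form_of x)`_m.
Proof. by rewrite /coef_term coef_poly; case: ifP => _; rewrite ?meval_var ?meval_nil. Qed.

Lemma meval_deriv_coef_term m (x : 'I_N -> F) :
  meval (deriv_coef_term m) x = (form_of x)^`()`_m.
Proof. by rewrite meval_mul meval_const meval_coef_term coef_deriv mulr_natl. Qed.

Lemma meval_genericity_term (x : 'I_N -> F) : x ord_max != 0 ->
  meval genericity_term x = x ord0 * x ord_max * resultant (form_of x) (form_of x)^`().
Proof.
move=> xN; rewrite !meval_mul !meval_var meval_det; congr (_ * _); symmetry.
apply: resultant_entrywise; first by rewrite size_deriv_num size_form_of.
  by rewrite size_form_of.
move=> i j; rewrite /sylvester_term; case: split => k; case: leqP => _;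
  by rewrite ?meval_coef_term ?meval_deriv_coef_term ?meval_nil ?mulr1n ?mulr0n.
Qed.

Lemma genericity_termP (x : 'I_N -> F) : meval genericity_term x != 0 ->
  [/\ x ord0 != 0, x ord_max != 0 & separable_poly (form_of x)].
Proof.
move=> hx; have xN : x ord_max != 0.
  by apply: contraNneq hx => h; rewrite !meval_mul !meval_var h mulr0 mul0r.
move: hx; rewrite meval_genericity_term // !mulf_eq0 !negb_or => /andP [/andP [x0 _] hr].
by split=> //; rewrite -resultant_deriv_neq0 // -size_poly_gt0 size_form_of.
Qed.

Lemma genericity_term_witness : (0 < s)%N -> exists x, meval genericity_term x != 0.
Proof.
move=> hs; pose Q : {poly F} := 'X^(2 * s) - 1.
have QE k : Q`_k = (k == 2 * s)%:R - (k == 0)%:R by rewrite coefB coefXn coef1.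
pose x := fun i : 'I_N => Q`_i; exists x.
have fx : form_of x = Q.
  apply/polyP => k; rewrite coef_poly /x; case: ltnP => hk; first by rewrite inordK.
  rewrite QE; have [-> ->] : (k == 2 * s) = false /\ (k == 0)%N = false.
    by split; apply/eqP; lia.
  by rewrite subr0.
have x0 : x ord0 = -1 by rewrite /x QE /= (_ : (0 == 2 * s)%N = false) ?sub0r //; lia.
have xN : x ord_max = 1 by rewrite /x QE /= eqxx (_ : (2 * s == 0)%N = false) ?subr0 //; lia.
rewrite meval_genericity_term ?xN ?oner_eq0 // x0 !mulf_neq0 ?oppr_eq0 ?oner_eq0 //.
rewrite resultant_deriv_neq0 fx; last by rewrite -size_poly_gt0 -fx size_form_of ?xN ?oner_eq0.
rewrite unlock /Q derivB derivXn derivC subr0 -scaler_nat coprimepZr; last first.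
  by rewrite pnatr_eq0; lia.
apply: coprimep_expr; have := coprimep_XsubC Q 0; rewrite polyC0 subr0 => ->.
by rewrite /root horner_coef0 QE (_ : (0 == 2 * s)%N = false) ?sub0r ?oppr_eq0 ?oner_eq0 //; lia.
Qed.
End DiscriminantCondition.

Theorem theorem5p1 (F : numClosedFieldType) (s : nat) (hs : (1 <= s)%N) :
  general (fun c : 'I_(2 * s).+1 -> F => @exactly_n_reps F s 'C((2 * s - 1)%N, s) c).
Proof.
exists [:: genericity_term F s]; split.
  by have [x hx] := genericity_term_witness F hs; exists x; rewrite /nonvanish /= hx.
move=> c; rewrite /nonvanish /= orbF => /genericity_termP [c0 cN sep].
exact: exactly_reps_of_separable.
Qed.
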